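(* Let $X$ be a topological space, $x \in X$, and let $F$ be a strategy for player II in the game $\mathsf{G}_1(\Omega_x, \Omega_x)$. Then for every finite sequence $D_0, \dots, D_n$ of elements of $\Omega_x$ there is an open set $A$ with $x \in A$ such that for every $a \in A \setminus \{x\}$ there is $D_a \in \Omega_x$ with $F(D_0, \dots, D_n, D_a) = a$.
   Context: For a point $x$ of a space $X$, $\Omega_x$ denotes the collection of all sets $A \subset X$ such that $x \notin A$ and $x \in \overline{A}$. The game $\mathsf{G}_1(\Omega_x,\Omega_x)$ is played in innings $n \in \omega$: in inning $n$ player I chooses $A_n \in \Omega_x$ and then player II chooses $a_n \in A_n$; player II wins if $\{a_n : n \in \omega\} \in \Omega_x$. A strategy for player II is a function $F$ assigning to each finite nonempty sequence $(D_0,\dots,D_n)$ of elements of $\Omega_x$ a point $F(D_0,\dots,D_n) \in D_n$. *)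

From HB Require Import structures.
From mathcomp Require Import all_boot.
From mathcomp Require Import boolp classical_sets topology.
Set Implicit Arguments. Unset Strict Implicit. Unset Printing Implicit Defensive.
Local Open Scope classical_set_scope.

Definition Omega (X : topologicalType) (x : X) : set (set X) :=
  [set A | ~ A x /\ closure A x].

Definition Omega_seq (X : topologicalType) (x : X) (s : seq (set X)) : Prop :=
  forall i, (i < size s)%N -> Omega x (nth set0 s i).

(* A strategy for player II in G_1(Omega_x, Omega_x): to every finite nonempty
   sequence (D_0, ..., D_n) of elements of Omega_x it assigns a point of D_n.
   Its values on other sequences are irrelevant. *)
Definition strategyII (X : topologicalType) (x : X) (F : seq (set X) -> X) : Prop :=
  forall s : seq (set X), s <> [::] -> Omega_seq x s -> last set0 s (F s).

(* If the set [U] of points [a <> x] that [F] never answers after [s] were in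
   Omega_x, player I could play [U] itself, and [F] would have to answer with a
   point of [U]. Hence [x] is not in the closure of [U], and the interior of the
   complement of [U] is the required open set. *)
From mathcomp Require Import all_boot.
From mathcomp Require Import boolp classical_sets topology.
Set Implicit Arguments. Unset Strict Implicit. Unset Printing Implicit Defensive.
Local Open Scope classical_set_scope.

Section StrategyII.
Variables (X : topologicalType) (x : X) (F : seq (set X) -> X).

Lemma Omega_seq_rcons (s : seq (set X)) (D : set X) :
  Omega_seq x s -> Omega x D -> Omega_seq x (rcons s D).
Proof.
move=> Os OD i; rewrite size_rcons ltnS leq_eqVlt nth_rcons.
by case/orP=> [/eqP ->|lt_i]; [rewrite ltnn eqxx | rewrite lt_i; apply: Os].
Qed.

Definition unanswered (s : seq (set X)) : set X :=
  [set a | a <> x /\ forall D, Omega x D -> F (rcons s D) <> a].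

Lemma unanswered_notin_Omega (s : seq (set X)) :
  strategyII x F -> Omega_seq x s -> ~ Omega x (unanswered s).
Proof.
move=> sF Os OU.
have : last set0 (rcons s (unanswered s)) (F (rcons s (unanswered s))).
  by apply: sF; [case: (s) | exact: Omega_seq_rcons].
by rewrite last_rcons => -[_ /(_ _ OU)].
Qed.

Lemma unanswered_notin_closure (s : seq (set X)) :
  strategyII x F -> Omega_seq x s -> ~ closure (unanswered s) x.
Proof.
move=> sF Os clU; apply: (unanswered_notin_Omega sF Os).
by split=> // -[].
Qed.

End StrategyII.

Theorem lemma2p3 (X : topologicalType) (x : X) (F : seq (set X) -> X) :
  strategyII x F ->
  forall s : seq (set X), s <> [::] -> Omega_seq x s ->
  exists A : set X, open A /\ A x /\
    forall a : X, A a -> a <> x ->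
      exists Da : set X, Omega x Da /\ F (rcons s Da) = a.
Proof.
(* [rcons s Da] is never empty. *)
move=> sF s _ Os.
exists (~` unanswered x F s)°; split; first exact: open_interior.
split; first by rewrite interiorC; exact: (unanswered_notin_closure sF Os).
move=> a /interior_subset Ua ax; apply: contrapT => noD.
by apply: Ua; split=> // D OD FDa; apply: noD; exists D.
Qed.
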